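(* Let $U,T,S\subseteq\mathbb{Z}_{>0}$ be finite with $U\preceq T\preceq S$. Assume there is $x\notin T$ with $|U_{<x}|=|T_{<x}|$, and assume there exists $y\in T_{<x}$ such that $(T\cup\{x\})\setminus\{y\}\preceq S$; let $y$ be the smallest such element. Then for every $S'\subseteq S$, $$U\triangleleft(T\triangleleft S')=U\triangleleft\big(((T\cup\{x\})\setminus\{y\})\triangleleft S'\big),$$ and consequently $U\triangleleft T=U\triangleleft((T\cup\{x\})\setminus\{y\})$.
   Context: For a finite set $S\subseteq\mathbb{Z}_{>0}$, $S(i)$ denotes its $i$th smallest element and $S_{<x}=\{s\in S:s<x\}$. $T\preceq S$ means $|T|\ge|S|$ and $T(i)<S(i)$ for all $i\in[|S|]$; $U\preceq T\preceq S$ means $U\preceq T$ and $T\preceq S$. For finite $S,T$, $T\triangleleft S$ is computed by going through $S$ from largest to smallest; each $s$ picks the largest element of $T$ less than $s$ not yet picked (if one exists); $T\triangleleft S$ is the set of picked elements. *)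

From mathcomp Require Import all_boot.
From mathcomp Require Import finmap.
Set Implicit Arguments. Unset Strict Implicit. Unset Printing Implicit Defensive.
Local Open Scope fset_scope.

(* increasing enumeration of a finite set: S(i) = nth 0 (sorted S) (i-1) *)
Definition sorted_elems (S : {fset nat}) : seq nat := sort leq (enum_fset S).

Definition fset_lt (S : {fset nat}) (x : nat) : {fset nat} :=
  [fset s in S | s < x].

Definition pos_set (S : {fset nat}) : Prop := forall s, s \in S -> 0 < s.

(* T ⪯ S : |T| >= |S| and T(i) < S(i) for all i in [|S|] (0-indexed here) *)
Definition prec (T S : {fset nat}) : Prop :=
  #|` S| <= #|` T| /\
  forall i, i < #|` S| -> nth 0 (sorted_elems T) i < nth 0 (sorted_elems S) i.

Definition pick_below (s : nat) (avail : {fset nat}) : option nat :=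
  let c := [seq t <- enum_fset avail | t < s] in
  if c is [::] then None else Some (\max_(t <- c) t).

(* go through ss (given from largest to smallest); each s picks the largest
   not-yet-picked element of avail below s; return the set of picked elements *)
Fixpoint tri_aux (ss : seq nat) (avail : {fset nat}) : {fset nat} :=
  match ss with
  | [::] => fset0
  | s :: ss' =>
      match pick_below s avail with
      | Some t => t |` tri_aux ss' (avail `\ t)
      | None => tri_aux ss' avail
      end
  end.

Definition tri (T S : {fset nat}) : {fset nat} :=
  tri_aux (rev (sorted_elems S)) T.

(* Read [U ◁ A] through the counting characterisation [is_tri]: [u] in [U] is
   picked iff fewer picked elements than elements of [A] lie above [u].
   Replacing some [p] in [A] by a larger [x] outside [A] raises these counts by
   one exactly on [[p, x)], so [U ◁ A] is unchanged as soon as every [u] of [U]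
   in [[p, x)] sees fewer elements of [U] than of [A] in [(u, x)]; for [A = T]
   this slack follows from [U ⪯ T] and [|U_{<x}| = |T_{<x}|].
   For [A = T ◁ S'], the minimality of [y] forces [|T_{<y}| <= |S_{<=y}|], so
   [S'] is dominated by [T] just above [y].  Then [T' ◁ S'], with
   [T' = (T ∪ {x}) \ {y}], is either [T ◁ S'] or [T ◁ S'] with some [p < x]
   replaced by [x], all elements of [T] in [(p, x)] being picked; so the slack
   for [T] carries over to [T ◁ S']. *)

From mathcomp Require Import all_boot.
From mathcomp Require Import finmap.
From mathcomp Require Import zify.
Set Implicit Arguments. Unset Strict Implicit. Unset Printing Implicit Defensive.
Local Open Scope fset_scope.
Local Open Scope nat_scope.

Definition fcount (X : {fset nat}) (P : pred nat) : nat := count P (enum_fset X).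

Lemma eq_in_fcount (X : {fset nat}) (P Q : pred nat) :
  {in X, P =1 Q} -> fcount X P = fcount X Q.
Proof. exact: eq_in_count. Qed.

Lemma leq_fcount (X Y : {fset nat}) (P Q : pred nat) :
  (forall z, z \in X -> P z -> (z \in Y) && Q z) -> fcount X P <= fcount Y Q.
Proof.
move=> XPYQ; rewrite /fcount -!size_filter; apply: uniq_leq_size.
  by rewrite filter_uniq // fset_uniq.
move=> z; rewrite !mem_filter => /andP [Pz Xz].
by have /andP [Yz ->] := XPYQ z Xz Pz.
Qed.

Lemma fcount_split (X : {fset nat}) (P Q R : pred nat) :
  (forall z, z \in X -> P z = Q z || R z) ->
  (forall z, z \in X -> ~~ (Q z && R z)) ->
  fcount X P = fcount X Q + fcount X R.
Proof.
move=> PQR disjQR; rewrite /fcount -count_predUI.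
rewrite (@eq_in_count _ (predI Q R) pred0) ?count_pred0 ?addn0.
  exact: eq_in_count.
by move=> z /disjQR /negbTE.
Qed.

Lemma fcount0 (X : {fset nat}) (P : pred nat) :
  (forall z, z \in X -> ~~ P z) -> fcount X P = 0.
Proof.
by move=> XnP; rewrite /fcount (@eq_in_count _ _ pred0) ?count_pred0 // => z /XnP /negbTE.
Qed.

Lemma fcount_gt0P (X : {fset nat}) (P : pred nat) :
  reflect (exists2 z, z \in X & P z) (0 < fcount X P).
Proof. by rewrite /fcount -has_count; apply: hasP. Qed.

Lemma fcount_le_card (X : {fset nat}) (P : pred nat) : fcount X P <= #|` X|.
Proof. exact: count_size. Qed.

Lemma fcount_fset1U (X : {fset nat}) x (P : pred nat) :
  x \notin X -> fcount (x |` X) P = P x + fcount X P.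
Proof.
move=> xNX; rewrite /fcount.
have perm_x : perm_eq (enum_fset (x |` X)) (x :: enum_fset X).
  apply: uniq_perm; first exact: fset_uniq.
    by rewrite /= xNX fset_uniq.
  by move=> z; rewrite in_cons; apply: in_fset1U.
by rewrite (permP perm_x).
Qed.

Lemma fcount_fsetD1 (X : {fset nat}) y (P : pred nat) :
  y \in X -> fcount (X `\ y) P + P y = fcount X P.
Proof.
move=> yX; rewrite -[in RHS](fsetD1K yX) fcount_fset1U ?in_fsetD1 ?eqxx //.
exact: addnC.
Qed.

Lemma fcount_swap (A : {fset nat}) p x (P : pred nat) : p \in A -> x \notin A ->
  fcount ((x |` A) `\ p) P + P p = P x + fcount A P.
Proof. by move=> pA xNA; rewrite fcount_fsetD1 ?fcount_fset1U // in_fset1U pA orbT. Qed.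

Lemma fcount_split1 (X : {fset nat}) z (P Q : pred nat) : z \in X ->
  (forall w, w \in X -> P w = (w == z) || Q w) -> ~~ Q z ->
  fcount X P = (fcount X Q).+1.
Proof.
move=> zX PQ nQz; rewrite (@fcount_split X P (pred1 z) Q) //; last first.
  by move=> w _; apply/negP => /andP [/eqP -> Qz]; rewrite Qz in nQz.
rewrite -(fcount_fsetD1 _ zX) fcount0 /= ?eqxx // => w.
by rewrite in_fsetD1 => /andP [].
Qed.

Lemma card_sep_fcount (X : {fset nat}) (P : pred nat) :
  #|` [fset z in X | P z]| = fcount X P.
Proof.
rewrite /fcount -size_filter; apply: perm_size; apply: uniq_perm.
- exact: fset_uniq.
- by rewrite filter_uniq // fset_uniq.
- by move=> z; rewrite mem_filter !inE andbC.
Qed.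

Lemma count_lt_nth (s : seq nat) i v : sorted ltn s -> i < size s ->
  (i < count (fun z => z < v) s) = (nth 0 s i < v).
Proof.
elim: s i => [//|a s IH] i /= sorted_as i_lt.
have a_min : all (ltn a) s := order_path_min ltn_trans sorted_as.
have {}IH := IH _ (path_sorted sorted_as).
have none_below : v <= a -> count (fun z => z < v) s = 0.
  move=> le_va; apply/eqP; rewrite -leqn0 leqNgt -has_count.
  by apply/hasP => -[z /(allP a_min) /=]; lia.
case: (ltnP a v) => [lt_av | le_va]; case: i i_lt => [|i] /= i_lt //.
- by rewrite add1n ltnS IH.
- by rewrite none_below // [a < v]ltnNge le_va.
- rewrite none_below // ltn0; apply/esym/negbTE; rewrite -leqNgt.
  by have /= := allP a_min _ (mem_nth 0 i_lt); lia.
Qed.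

Lemma sorted_elems_ltn (X : {fset nat}) : sorted ltn (sorted_elems X).
Proof.
by rewrite ltn_sorted_uniq_leq sort_uniq fset_uniq sort_sorted //; exact: leq_total.
Qed.

Lemma count_sorted_elems (X : {fset nat}) (P : pred nat) :
  count P (sorted_elems X) = fcount X P.
Proof. exact: count_sort. Qed.

Lemma nth_sorted_elems_lt (X : {fset nat}) i v : i < #|` X| ->
  (nth 0 (sorted_elems X) i < v) = (i < fcount X (fun z => z < v)).
Proof.
move=> i_lt; rewrite -count_sorted_elems count_lt_nth ?sorted_elems_ltn //.
by rewrite size_sort.
Qed.

Lemma precP (T S : {fset nat}) :
  prec T S <-> forall v, fcount S (fun z => z <= v) <= fcount T (fun z => z < v).
Proof.
split=> [[le_ST lt_TS] v | dom].
  case: (posnP (fcount S (fun z => z <= v))) => [-> // | m_gt0].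
  set m := fcount S _ in m_gt0 *.
  have m_le : m <= #|` S| by apply: fcount_le_card.
  have S_m : nth 0 (sorted_elems S) m.-1 < v.+1.
    rewrite nth_sorted_elems_lt; last by rewrite prednK.
    by rewrite -[fcount _ _]/m prednK.
  have T_m : nth 0 (sorted_elems T) m.-1 < v.
    by apply: leq_trans (lt_TS _ _) _; rewrite ?prednK // -ltnS.
  have mT : m.-1 < #|` T| by rewrite prednK // (leq_trans m_le le_ST).
  by move: T_m; rewrite nth_sorted_elems_lt // prednK.
have dom_nth i : i < #|` S| -> i < fcount T (fun z => z < nth 0 (sorted_elems S) i).
  move=> i_lt; apply: leq_trans (dom _).
  by have := nth_sorted_elems_lt (nth 0 (sorted_elems S) i).+1 i_lt; rewrite ltnSn.
have ltT i : i < #|` S| -> i < #|` T|.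
  by move=> /dom_nth i_lt; apply: leq_trans i_lt (fcount_le_card _ _).
split=> [|i i_lt]; last by rewrite nth_sorted_elems_lt ?dom_nth ?ltT.
by case: #|` S| ltT => // n /(_ n (ltnSn n)).
Qed.

Lemma bigmax_mem (a : nat) (c : seq nat) : \max_(t <- a :: c) t \in a :: c.
Proof.
elim: c a => [|b c IH] a; first by rewrite big_seq1 mem_head.
by rewrite big_cons; case: leqP => _; rewrite ?mem_head // in_cons IH orbT.
Qed.

Lemma ex_fset_max (X : {fset nat}) (q : pred nat) a : a \in X -> q a ->
  exists m, [/\ m \in X, q m & forall z, z \in X -> q z -> z <= m].
Proof.
move=> aX qa; have : a \in [seq t <- enum_fset X | q t] by rewrite mem_filter qa.
case E: [seq t <- enum_fset X | q t] => [//|b c] _.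
have := bigmax_mem b c; rewrite -E mem_filter => /andP [qm mX].
exists (\max_(t <- [seq t <- enum_fset X | q t]) t); split=> // z zX qz.
by apply: leq_bigmax_seq => //; rewrite mem_filter qz.
Qed.

Lemma pick_belowP s (avail : {fset nat}) :
  match pick_below s avail with
  | Some m => [/\ m \in avail, m < s & forall z, z \in avail -> z < s -> z <= m]
  | None => forall z, z \in avail -> s <= z
  end.
Proof.
rewrite /pick_below; case E: [seq t <- enum_fset avail | t < s] => [|a c].
  move=> z z_av; rewrite leqNgt; apply/negP => lt_zs.
  have : z \in [seq t <- enum_fset avail | t < s] by rewrite mem_filter lt_zs.
  by rewrite E.
have : \max_(t <- a :: c) t \in [seq t <- enum_fset avail | t < s].
  by rewrite E bigmax_mem.
rewrite mem_filter => /andP [lt_ms m_av]; split=> // z z_av lt_zs.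
have : z \in [seq t <- enum_fset avail | t < s] by rewrite mem_filter lt_zs.
by rewrite E => z_ac; apply: leq_bigmax_seq.
Qed.

(* [M] is [tri U A]: [u] gets picked iff some element of [A] above [u] is
   left once the picked elements above [u] have taken their partners. *)
Definition is_tri (U A M : {fset nat}) : Prop :=
  M `<=` U /\
  forall u, u \in U ->
    (u \in M) = (fcount M (fun z => u < z) < fcount A (fun z => u < z)).

Lemma tri_auxP (ss : seq nat) (avail : {fset nat}) : sorted gtn ss ->
  tri_aux ss avail `<=` avail /\
  forall u, u \in avail -> (u \in tri_aux ss avail) =
    (fcount (tri_aux ss avail) (fun z => u < z) < count (fun z => u < z) ss).
Proof.
elim: ss avail => [|s ss IH] avail desc /=.
  by split=> [|u _]; rewrite ?fsub0set // in_fset0 fcount0.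
have s_max : all (gtn s) ss.
  by apply: order_path_min desc => a b c /= lt_ba lt_cb; apply: ltn_trans lt_cb lt_ba.
have {}IH := fun av => IH av (path_sorted desc).
have none_above u : s <= u -> count (fun z => u < z) ss = 0.
  move=> le_su; apply/eqP; rewrite -leqn0 leqNgt -has_count.
  by apply/hasP => -[z /(allP s_max) /=]; lia.
case: (pick_below s avail) (pick_belowP s avail) => [m [m_av lt_ms m_max] | none_below].
  have [sub_R R_P] := IH (avail `\ m); set R := tri_aux ss _ in sub_R R_P *.
  have R_av z : z \in R -> (z != m) && (z \in avail).
    by move=> /(fsubsetP sub_R); rewrite in_fsetD1.
  have R_lt_s z : z \in R -> z < s.
    move=> zR; rewrite ltnNge; apply/negP => le_sz.
    by have := R_P z (fsubsetP sub_R z zR); rewrite zR none_above // ltn0.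
  have mNR : m \notin R by apply/negP => /R_av; rewrite eqxx.
  split.
    apply/fsubsetP => z; rewrite in_fset1U => /orP [/eqP -> // | /R_av /andP []//].
  move=> u u_av; rewrite fcount_fset1U // in_fset1U.
  case: (eqVneq u m) => [-> | neq_um] /=.
    rewrite ltnn fcount0 ?lt_ms // => z zR; rewrite -leqNgt.
    by have /andP [_ /m_max] := R_av z zR; apply; apply: R_lt_s.
  have u_avm : u \in avail `\ m by rewrite in_fsetD1 neq_um.
  case: (ltnP u s) => [lt_us | le_su].
    have lt_um : u < m by have := m_max u u_av lt_us; lia.
    by rewrite lt_um R_P.
  by rewrite R_P // none_above // [s > u]ltnNge le_su; lia.
have [sub_R R_P] := IH avail.
split=> // u u_av; rewrite R_P // none_above ?none_below //.
by rewrite [s > u]ltnNge none_below.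
Qed.

Lemma tri_is_tri (U A : {fset nat}) : is_tri U A (tri U A).
Proof.
have desc : sorted gtn (rev (sorted_elems A)).
  by rewrite rev_sorted; apply: sorted_elems_ltn.
have [sub_tri tri_P] := tri_auxP U desc.
by split=> // u uU; rewrite /tri tri_P // count_rev count_sorted_elems.
Qed.

(* Compare the two sets at their largest point of disagreement: above it they
   agree, so the counts deciding membership of that point agree too. *)
Lemma is_tri_uniq (U A M1 M2 : {fset nat}) :
  is_tri U A M1 -> is_tri U A M2 -> M1 = M2.
Proof.
move=> [sub1 M1P] [sub2 M2P]; apply/fsetP => z; apply/eqP/negPn/negP => disagree.
have zM : z \in M1 `|` M2.
  by rewrite in_fsetU; move: disagree; case: (z \in M1); case: (z \in M2).
have [m [mM disagree_m m_max]] :=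
  ex_fset_max (q := fun w => (w \in M1) != (w \in M2)) zM disagree.
have agree_above : fcount M1 (fun w => m < w) = fcount M2 (fun w => m < w).
  have agree w : m < w -> (w \in M1) = (w \in M2).
    move=> lt_mw; apply/eqP/negPn/negP => disagree_w.
    have wM : w \in M1 `|` M2.
      by rewrite in_fsetU; move: disagree_w; case: (w \in M1); case: (w \in M2).
    by have := m_max w wM disagree_w; lia.
  by apply/eqP; rewrite eqn_leq !leq_fcount // => w wM lt_mw;
    rewrite lt_mw andbT ?agree // -agree.
have mU : m \in U.
  by move: mM; rewrite in_fsetU => /orP [/(fsubsetP sub1) | /(fsubsetP sub2)].
by move: disagree_m; rewrite (M1P m mU) (M2P m mU) agree_above eqxx.
Qed.

Lemma tri_unique (U A M : {fset nat}) : is_tri U A M -> tri U A = M.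
Proof. exact: is_tri_uniq (tri_is_tri U A). Qed.

(* Use the membership condition at the least picked element above [v]. *)
Lemma is_tri_above (U A M : {fset nat}) v : is_tri U A M ->
  fcount M (fun z => v < z) <= fcount A (fun z => v < z).
Proof.
move=> [sub MP].
case: (posnP (fcount M (fun z => v < z))) => [-> // | /fcount_gt0P [z zM lt_vz]].
have exP : exists n, (n \in M) && (v < n) by exists z; rewrite zM.
case: (ex_minnP exP) => m /andP [mM lt_vm] m_min.
have lt_MA : fcount M (fun w => m < w) < fcount A (fun w => m < w).
  by rewrite -MP // (fsubsetP sub).
have le_A : fcount A (fun w => m < w) <= fcount A (fun w => v < w).
  by apply: leq_fcount => a aA lt_ma; rewrite aA /=; lia.
rewrite (@fcount_split1 M m _ (fun w => m < w)) ?ltnn //; first lia.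
move=> w wM; case: (eqVneq w m) => [-> | neq_wm] /=; first by rewrite lt_vm.
have := m_min w; rewrite wM /=; case: (ltnP v w) => lt_vw; last lia.
by move=> /(_ isT); move: neq_wm => /eqP; lia.
Qed.

(* Trading [p] for [x] raises the count above [u] by one exactly when
   [p <= u < x]; such [u] are picked before the trade by the slack hypothesis
   (and [is_tri_above] at [x.-1]), hence also after it. *)
Lemma is_tri_swap (U A M : {fset nat}) p x :
  is_tri U A M -> p \in A -> x \notin A -> p < x ->
  (forall u, u \in U -> p <= u -> u < x ->
     fcount U (fun z => u < z < x) < fcount A (fun z => u < z < x)) ->
  is_tri U ((x |` A) `\ p) M.
Proof.
move=> triM pA xNA lt_px slack; have [sub MP] := triM; split=> // u uU.
have swap := fcount_swap (fun z => u < z) pA xNA; rewrite /= in swap.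
rewrite MP //; case: (boolP ((p <= u) && (u < x))) => [/andP [le_pu lt_ux] | out].
  have above_x := is_tri_above x.-1 triM.
  have split_x X : fcount X (fun z => u < z) =
      fcount X (fun z => u < z < x) + fcount X (fun z => x.-1 < z).
    by apply: fcount_split => z _; lia.
  have M_U : fcount M (fun z => u < z < x) <= fcount U (fun z => u < z < x).
    by apply: leq_fcount => z zM ->; rewrite (fsubsetP sub z zM).
  have := slack u uU le_pu lt_ux; rewrite !split_x in swap *.
  move: swap; rewrite lt_ux [u < p]ltnNge le_pu /=; lia.
have : fcount ((x |` A) `\ p) (fun z => u < z) = fcount A (fun z => u < z).
  by move: swap out; case: (ltnP p u); case: (ltnP u x); case: (ltnP u p) => //=; lia.
by move=> ->.
Qed.

Section TriOfExchange.

Variables (T S' A : {fset nat}) (x y : nat).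
Hypotheses (triA : is_tri T S' A) (yT : y \in T) (lt_yx : y < x) (xNT : x \notin T).
Hypothesis dom : forall v, y < v -> v <= x ->
  fcount S' (fun w => y < w <= v) <= fcount T (fun w => y < w < v).

Let subA : A `<=` T := triA.1.
Let triAP := triA.2.

Lemma x_notin_tri : x \notin A.
Proof. by apply: contra xNT => /(fsubsetP subA). Qed.

(* With [w] the least point of [(y, z]] past which [S'] is matched into [A],
   every [t] of [T] in [(y, w)] is picked, so [dom w] accounts for the
   elements of [S'] in [(y, w]]. *)
Lemma y_notin_tri z : y < z -> z <= x ->
  fcount S' (fun w => z < w) <= fcount A (fun w => z <= w) -> y \notin A.
Proof.
move=> lt_yz le_zx matched_z.
pose matched n := fcount S' (fun w => n < w) <= fcount A (fun w => n <= w).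
have exP : exists n, (y < n <= z) && matched n by exists z; rewrite lt_yz leqnn.
case: (ex_minnP exP) => w /andP [/andP [lt_yw le_wz] matched_w] w_min.
have picked t : t \in T -> y < t -> t < w -> t \in A.
  move=> tT lt_yt lt_tw; rewrite triAP //.
  have : ~~ matched t.
    apply/negP => matched_t; have := w_min t.
    by rewrite lt_yt (leq_trans (ltnW lt_tw) le_wz) matched_t => /(_ isT); lia.
  have : fcount A (fun v => t < v) <= fcount A (fun v => t <= v).
    by apply: leq_fcount => v vA /= lt_tv; rewrite vA; lia.
  rewrite /matched; lia.
have S'_split : fcount S' (fun v => y < v) =
    fcount S' (fun v => y < v <= w) + fcount S' (fun v => w < v).
  by apply: fcount_split => v _; lia.
have A_split : fcount A (fun v => y < v) =
    fcount A (fun v => y < v < w) + fcount A (fun v => w <= v).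
  by apply: fcount_split => v _; lia.
have T_A : fcount T (fun v => y < v < w) <= fcount A (fun v => y < v < w).
  by apply: leq_fcount => v vT /andP [lt_yv lt_vw]; rewrite picked ?lt_yv.
have := dom lt_yw (leq_trans le_wz le_zx).
by rewrite triAP // -leqNgt; move: matched_w; rewrite /matched; lia.
Qed.

Lemma tri_replace_unmatched :
  fcount S' (fun w => x < w) <= fcount A (fun w => x < w) ->
  tri ((x |` T) `\ y) S' = A.
Proof.
move=> x_matched; apply: tri_unique.
have yNA : y \notin A.
  apply: (y_notin_tri lt_yx (leqnn x)); apply: leq_trans x_matched _.
  by apply: leq_fcount => w wA /= lt_xw; rewrite wA; lia.
split.
  apply/fsubsetP => z zA.
  rewrite in_fsetD1 in_fset1U (fsubsetP subA z zA) orbT andbT.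
  by apply: contraNneq yNA => <-.
move=> t; rewrite in_fsetD1 in_fset1U => /andP [_ /orP [/eqP -> | tT]].
  by rewrite (negbTE x_notin_tri); apply/esym/negbTE; rewrite -leqNgt.
exact: triAP.
Qed.

Section PartnerTakeover.

Variable p : nat.
Hypotheses (pT : p \in T) (le_yp : y <= p) (lt_px : p < x).
Hypothesis x_unmatched : fcount A (fun w => x < w) < fcount S' (fun w => x < w).
Hypothesis p_tight : (p == y) ||
  (fcount S' (fun w => p < w) <= (fcount A (fun w => p < w)).+1).
Hypothesis surplus_above_p : forall t, t \in T -> p < t -> t < x ->
  (fcount A (fun w => t < w)).+2 <= fcount S' (fun w => t < w).

Lemma between_p_x_in_tri t : t \in T -> p < t -> t < x -> t \in A.
Proof.
by move=> tT lt_pt lt_tx; rewrite triAP //; have := surplus_above_p tT lt_pt lt_tx; lia.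
Qed.

(* Let [t] be the next element of [T] above [p], or [x] if there is none
   below [x]: then [A] has as many elements above [p] as from [t] on, and
   fewer than [S'] has above [t]. *)
Lemma p_in_tri : p \in A.
Proof.
rewrite triAP //.
have exP : exists n, ((n \in T) && (p < n < x)) || (n == x).
  by exists x; rewrite eqxx orbT.
case: (ex_minnP exP) => t t_next t_min.
have le_tx : t <= x by apply: t_min; rewrite eqxx orbT.
have lt_pt : p < t by case/orP: t_next => [/and3P [] | /eqP ->].
have A_p : fcount A (fun w => p < w) = fcount A (fun w => t <= w).
  apply: eq_in_fcount => z /(fsubsetP subA) zT /=.
  apply/idP/idP => [lt_pz | le_tz]; last lia.
  rewrite leqNgt; apply/negP => lt_zt; have := t_min z.
  by rewrite zT lt_pz (leq_trans lt_zt le_tx) => /(_ isT); lia.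
have A_t : fcount A (fun w => t <= w) < fcount S' (fun w => t < w).
  case/orP: t_next => [/and3P [tT _ lt_tx] | /eqP ->].
    rewrite (@fcount_split1 A t _ (fun w => t < w)) ?ltnn ?between_p_x_in_tri //.
      by have := surplus_above_p tT lt_pt lt_tx; lia.
    by move=> w _; lia.
  rewrite (@eq_in_fcount A _ (fun w => x < w)) // => z zA /=.
  have neq_zx : z != x by apply: contraNneq _ x_notin_tri => <-.
  by move: neq_zx => /eqP; lia.
have : fcount S' (fun w => t < w) <= fcount S' (fun w => p < w).
  by apply: leq_fcount => w wS /= lt_tw; rewrite wS; lia.
lia.
Qed.

Lemma y_notin_tri_of_p : p != y -> y \notin A.
Proof.
move=> neq_py; have lt_yp : y < p by move: neq_py => /eqP; lia.
apply: (y_notin_tri lt_yp (ltnW lt_px)); move: p_tight; rewrite (negbTE neq_py) /=.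
rewrite (@fcount_split1 A p (fun w => p <= w) (fun w => p < w)) ?ltnn ?p_in_tri //.
by move=> w _; lia.
Qed.

Lemma tri_replace_matched : tri ((x |` T) `\ y) S' = (x |` A) `\ p.
Proof.
have pA := p_in_tri; have xNA := x_notin_tri; apply: tri_unique; split.
  apply/fsubsetP => z; rewrite !in_fsetD1 !in_fset1U.
  case/andP => neq_zp /orP [/eqP -> | zA].
    by rewrite eqxx andbT; apply: contraTneq lt_yx => ->; rewrite ltnn.
  rewrite (fsubsetP subA z zA) orbT andbT.
  case: (eqVneq p y) => [<- // | neq_py].
  by apply: contraNneq (y_notin_tri_of_p neq_py) => <-.
move=> t; rewrite in_fsetD1 in_fset1U => /andP [neq_ty /orP [/eqP -> | tT]].
  have := fcount_swap (fun w => x < w) pA xNA.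
  by rewrite !inE eqxx /=; move: x_unmatched; lia.
have neq_tx : t != x by apply: contraNneq xNT => <-.
have := fcount_swap (fun w => t < w) pA xNA.
rewrite !inE (negbTE neq_tx) /=; case: (ltnP t x) => [lt_tx | le_xt].
  case: (ltngtP t p) => [lt_tp | lt_pt | eq_tp].
  - by rewrite triAP //; lia.
  - by rewrite between_p_x_in_tri //; have := surplus_above_p tT lt_pt lt_tx; lia.
  - by move: p_tight; rewrite -eq_tp (negbTE neq_ty) /=; lia.
by rewrite triAP //; move: neq_tx => /eqP; lia.
Qed.

End PartnerTakeover.

(* Either [x] stays unpicked and nothing changes, or [x] takes over the
   partner of [p], the largest element of [T] in [[y, x)] that is [y] itself
   or has a surplus of at most one element of [S'] above it. *)
Lemma tri_replace :
  tri ((x |` T) `\ y) S' = A \/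
  exists p, [/\ p \in A, p < x, tri ((x |` T) `\ y) S' = (x |` A) `\ p &
                forall t, t \in T -> p < t -> t < x -> t \in A].
Proof.
case: (leqP (fcount S' (fun w => x < w)) (fcount A (fun w => x < w))).
  by left; apply: tri_replace_unmatched.
move=> x_unmatched.
right; pose tight t := (y <= t < x) &&
  ((t == y) || (fcount S' (fun w => t < w) <= (fcount A (fun w => t < w)).+1)).
have tight_y : tight y by rewrite /tight leqnn lt_yx eqxx.
have [p [pT /andP [/andP [le_yp lt_px] p_tight] p_max]] := ex_fset_max yT tight_y.
have surplus t : t \in T -> p < t -> t < x ->
    (fcount A (fun w => t < w)).+2 <= fcount S' (fun w => t < w).
  move=> tT lt_pt lt_tx; rewrite leqNgt; apply/negP => small.
  have : tight t.
    by rewrite /tight lt_tx (leq_trans le_yp (ltnW lt_pt)) /=; apply/orP; right; lia.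
  by move=> /(p_max t tT); lia.
exists p; split=> //.
- exact: p_in_tri.
- exact: tri_replace_matched.
- exact: between_p_x_in_tri.
Qed.

End TriOfExchange.

Section ExchangeYForX.

Variables (U T S : {fset nat}) (x y : nat).
Hypotheses (UT : prec U T) (TS : prec T S).
Hypotheses (xNT : x \notin T) (yT : y \in T) (lt_yx : y < x).
Hypothesis card_below_x : fcount U (fun w => w < x) = fcount T (fun w => w < x).
Hypothesis T'S : prec ((x |` T) `\ y) S.
Hypothesis y_min : forall y', y' \in fset_lt T x -> prec ((x |` T) `\ y') S -> y <= y'.

(* Otherwise the largest [y'] of [T] below [y] could be exchanged for [x]
   instead of [y], contradicting the minimality of [y]. *)
Lemma tight_at_y : fcount T (fun w => w < y) <= fcount S (fun w => w <= y).
Proof.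
rewrite leqNgt; apply/negP => loose.
have /fcount_gt0P [z zT lt_zy] := leq_ltn_trans (leq0n _) loose.
have [y' [y'T lt_y'y y'_max]] := ex_fset_max (q := fun w => w < y) zT lt_zy.
have lt_y'x : y' < x := ltn_trans lt_y'y lt_yx.
suff : prec ((x |` T) `\ y') S.
  by move/(y_min (y' := y')); rewrite !inE y'T lt_y'x; lia.
apply/precP => v; have := fcount_swap (fun w => w < v) y'T xNT; rewrite /=.
have := (precP _ _).1 TS v; case: (leqP v y') => [le_vy' | lt_y'v]; first by lia.
case: (leqP v y) => [le_vy | lt_yv].
  have : fcount S (fun w => w <= v) <= fcount S (fun w => w <= y).
    by apply: leq_fcount => w wS /= le_wv; rewrite wS; lia.
  have : fcount T (fun w => w < y) <= fcount T (fun w => w < v).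
    apply: leq_fcount => w wT /= lt_wy; rewrite wT.
    by have := y'_max w wT lt_wy; lia.
  lia.
case: (leqP v x) => [le_vx | lt_xv]; last by lia.
have := (precP _ _).1 T'S v.
by have := fcount_swap (fun w => w < v) yT xNT; rewrite /=; lia.
Qed.

Lemma dom_above_y v : y < v -> v <= x ->
  fcount S (fun w => y < w <= v) <= fcount T (fun w => y < w < v).
Proof.
move=> lt_yv le_vx; have := (precP _ _).1 T'S v.
have := fcount_swap (fun w => w < v) yT xNT; rewrite /= lt_yv [x < v]ltnNge le_vx.
rewrite (@fcount_split S (fun w => w <= v) (fun w => w <= y) (fun w => y < w <= v));
  try by move=> w _; lia.
rewrite (@fcount_split T (fun w => w < v) (fun w => w < y) (fun w => y <= w < v));
  try by move=> w _; lia.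
rewrite (@fcount_split1 T y (fun w => y <= w < v) (fun w => y < w < v)) ?ltnn //;
  last by move=> w _; lia.
by have := tight_at_y; lia.
Qed.

Lemma slack_below_x u : u \in U -> u < x ->
  fcount U (fun w => u < w < x) < fcount T (fun w => u < w < x).
Proof.
move=> uU lt_ux; have := (precP _ _).1 UT u; move: card_below_x.
rewrite (@fcount_split U (fun w => w < x) (fun w => w < u) (fun w => u <= w < x));
  try by move=> w _; lia.
rewrite (@fcount_split1 U u (fun w => u <= w < x) (fun w => u < w < x)) ?ltnn //;
  last by move=> w _; lia.
rewrite (@fcount_split T (fun w => w < x) (fun w => w <= u) (fun w => u < w < x));
  try by move=> w _; lia.
lia.
Qed.

Lemma tri_tri_exchange S' : S' `<=` S ->
  tri U (tri T S') = tri U (tri ((x |` T) `\ y) S').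
Proof.
move=> subS'.
have dom' v : y < v -> v <= x ->
    fcount S' (fun w => y < w <= v) <= fcount T (fun w => y < w < v).
  move=> lt_yv le_vx; apply: leq_trans (dom_above_y lt_yv le_vx).
  by apply: leq_fcount => w wS' ->; rewrite (fsubsetP subS').
have [-> // | [p [pA lt_px -> between]]] :=
  tri_replace (tri_is_tri T S') yT lt_yx xNT dom'.
apply/esym/tri_unique; apply: is_tri_swap (tri_is_tri _ _) pA _ lt_px _.
  by apply: contra xNT => /(fsubsetP (tri_is_tri T S').1).
move=> u uU le_pu lt_ux; apply: leq_trans (slack_below_x uU lt_ux) _.
by apply: leq_fcount => w wT /andP [lt_uw lt_wx]; rewrite between ?lt_uw //; lia.
Qed.

Lemma tri_exchange : tri U T = tri U ((x |` T) `\ y).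
Proof.
apply/esym/tri_unique; apply: is_tri_swap (tri_is_tri _ _) yT xNT lt_yx _.
by move=> u uU _; apply: slack_below_x.
Qed.

End ExchangeYForX.

Theorem lemma4p16 (U T S : {fset nat}) (x y : nat) :
  pos_set U -> pos_set T -> pos_set S ->
  prec U T -> prec T S ->
  0 < x -> x \notin T ->
  #|` fset_lt U x| = #|` fset_lt T x| ->
  y \in fset_lt T x ->
  prec ((x |` T) `\ y) S ->
  (forall y', y' \in fset_lt T x -> prec ((x |` T) `\ y') S -> y <= y') ->
  (forall S', S' `<=` S ->
     tri U (tri T S') = tri U (tri ((x |` T) `\ y) S')) /\
  tri U T = tri U ((x |` T) `\ y).
Proof.
move=> _ _ _ UT TS _ xNT card_below_x y_lt T'S y_min.
have /andP [yT lt_yx] : (y \in T) && (y < x) by move: y_lt; rewrite /fset_lt !inE.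
rewrite /fset_lt !card_sep_fcount in card_below_x.
split; first exact: (tri_tri_exchange UT TS xNT yT lt_yx card_below_x T'S y_min).
exact: (tri_exchange UT xNT yT lt_yx card_below_x).
Qed.
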